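(* Assume the hypothesis (H3) below holds. Then for any $v\in V_0(E)$ and any finite configuration $\xi$, the function $t\mapsto H_t(\xi)=\dfrac{\det J(\phi^v_t(\xi))}{\det J(\xi)}$ is differentiable and, for $T>0$, $$\sup_{|t|\le T}\Big|\frac{\mathrm dH_t(\xi)}{\mathrm dt}\Big|\le\frac{u_{|\xi|}}{\det J(\xi)},$$ where $(u_n,\,n\ge0)$ is a sequence of nonnegative numbers satisfying $\sum_n\frac{u_n}{n!}|x|^n<\infty$ for all $x\in\mathbb R$.
   Context: $E$ is a domain of $\mathbb R^d$ with Radon measure $\lambda$; $K$ is a bounded symmetric Hilbert–Schmidt integral operator on $L^2(E,\lambda)$, kernel $K(x,y)$, spectrum in $[0,1)$, locally trace class; $\Lambda$ is a fixed compact set and $J(x,y)$ is the kernel of $J_{\Lambda,-1}=(I-K_\Lambda)^{-1}K_\Lambda$, $K_\Lambda=P_\Lambda KP_\Lambda$. For $\xi=\{x_1,\dots,x_n\}$, $\det J(\xi)=\det(J(x_i,x_k))_{i,k}$ and $|\xi|=n$; $U(\xi)=-\log\det J(\xi)$. $V_0(E)$: smooth compactly supported vector fields; $\phi^v_t$ the flow of $v$, acting on configurations atom by atom. $\nabla_vU(\xi)=\frac{\mathrm d}{\mathrm dt}U(\phi^v_t(\xi))|_{t=0}$. Hypothesis (H3): $U$ is differentiable at every finite configuration, and for any $v\in V_0(E)$ there is $c>0$ such that for all finite $\xi$, $|\nabla_vU(\xi)|\le u_{|\xi|}/\det J(\xi)$ with $u_n=c\,n^{n/2}$ (a sequence with $\sum_n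 u_n|x|^n/n!<\infty$ for all $x$). *)

From HB Require Import structures.
From mathcomp Require Import all_boot all_order all_algebra.
From mathcomp Require Import all_classical all_reals all_analysis.
Set Implicit Arguments. Unset Strict Implicit. Unset Printing Implicit Defensive.
Import Order.TTheory GRing.Theory Num.Theory.
Import numFieldNormedType.Exports.
Local Open Scope classical_set_scope.
Local Open Scope ring_scope.

Section Defs.
Variables (R : realType) (d : nat).
Local Notation pt := 'rV[R]_d.

Definition iterD (us : seq pt) (f : pt -> pt) : pt -> pt :=
  foldr (fun u g => 'D_u g) f us.

Definition smooth (f : pt -> pt) : Prop :=
  forall (us : seq pt) (x : pt), differentiable (iterD us f) x.

Definition V0 (E : set pt) (v : pt -> pt) : Prop :=
  smooth v /\ compact (closure [set x | v x != 0]) /\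
  closure [set x | v x != 0] `<=` E.

(* phi is the flow of v: phi_0 = id, d/dt phi_t(x) = v(phi_t(x)),
   group law, and E is invariant. (These determine the flow of v uniquely.) *)
Definition is_flow (E : set pt) (v : pt -> pt) (phi : R -> pt -> pt) : Prop :=
  [/\ forall x, phi 0 x = x,
      forall (t : R) x, is_derive t (1 : R) (phi ^~ x) (v (phi t x)),
      forall s t x, phi (s + t) x = phi s (phi t x)
    & forall t x, E x -> E (phi t x)].

(* finite configuration in E, represented by a duplicate-free list of its atoms *)
Definition config (E : set pt) (xi : seq pt) : Prop :=
  uniq xi /\ forall x, x \in xi -> E x.

Definition Jmx (J : pt -> pt -> R) (xi : seq pt) : 'M[R]_(size xi) :=
  \matrix_(i < size xi, k < size xi) J (nth 0 xi i) (nth 0 xi k).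

Definition detJ (J : pt -> pt -> R) (xi : seq pt) : R := \det (Jmx J xi).

Definition U (J : pt -> pt -> R) (xi : seq pt) : R := - ln (detJ J xi).

(* U as a function of the positions of n atoms (rows of an n x d matrix) *)
Definition Upos (J : pt -> pt -> R) (n : nat) (y : 'M[R]_(n, d)) : R :=
  - ln (\det (\matrix_(i < n, k < n) J (row i y) (row k y))).

Definition posmx (xi : seq pt) : 'M[R]_(size xi, d) :=
  \matrix_(i < size xi, j < d) (nth 0 xi i) 0 j.

Definition flow_cfg (phi : R -> pt -> pt) (t : R) (xi : seq pt) : seq pt :=
  map (phi t) xi.

Definition gradU (J : pt -> pt -> R) (phi : R -> pt -> pt) (xi : seq pt) : R :=
  derive1 (fun t : R => U J (flow_cfg phi t xi)) 0.

Definition useq (c : R) (n : nat) : R := c * powR (n%:R) (n%:R / 2).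

Definition H3_bound (E : set pt) (J : pt -> pt -> R) (phi : R -> pt -> pt)
  (c : R) : Prop :=
  forall xi, config E xi ->
    `|gradU J phi xi| <= useq c (size xi) / detJ J xi.

Definition H3 (E : set pt) (J : pt -> pt -> R) : Prop :=
  (forall xi, config E xi ->
     0 < detJ J xi /\ differentiable (Upos (n := size xi) J) (posmx xi)) /\
  (forall v phi, V0 E v -> is_flow E v phi ->
     exists2 c : R, 0 < c & H3_bound E J phi c).

Definition Ht (J : pt -> pt -> R) (phi : R -> pt -> pt) (xi : seq pt) (t : R) : R :=
  detJ J (flow_cfg phi t xi) / detJ J xi.

End Defs.

From HB Require Import structures.
From mathcomp Require Import all_boot all_order all_algebra.
From mathcomp Require Import all_classical all_reals all_analysis.
Import Order.TTheory GRing.Theory Num.Theory.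
Import numFieldNormedType.Exports.
Local Open Scope classical_set_scope.
Local Open Scope ring_scope.

(* Write g(s) = det J(phi_s xi) = exp(-U(phi_s xi)).  By the group law of the
   flow, d/ds U(phi_s xi) at s = t is nabla_v U(phi_t xi), so
   g'(t) = - g(t) nabla_v U(phi_t xi), and (H3) applied to the configuration
   phi_t xi gives |g'(t)| <= g(t) u_n / g(t) = u_n for every t.  Dividing by
   g(0) = det J(xi) bounds the derivative of H_t uniformly in t. *)

Set Implicit Arguments. Unset Strict Implicit.

Section RealDerivatives.
Variable R : realType.

Lemma derive1_shift (f : R -> R) t :
  derivable f t 1 -> derive1 (fun s => f (s + t)) 0 = derive1 f t.
Proof.
move=> ft; have -> : (fun s => f (s + t)) = f \o shift t by [].
have dshift : derivable (shift t) 0 1.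
  by apply: derivableD; [exact: derivable_id | exact: derivable_cst].
rewrite derive1_comp; [|exact: dshift|rewrite /= add0r; exact: ft].
rewrite [X in _ * X]derive1E.
by rewrite (@derive_val _ _ _ _ _ _ _ (is_derive_shift _ _ _)) mulr1 /= add0r.
Qed.

Lemma derive1_expRN (h : R -> R) t : derivable h t 1 ->
  derive1 (fun s => expR (- h s)) t = - expR (- h t) * derive1 h t.
Proof.
move=> ht; have -> : (fun s => expR (- h s)) = expR \o (- h) by [].
rewrite derive1_comp; [|exact: derivableN|exact: derivable_expR].
rewrite derive1N // derive1E.
by rewrite (@derive_val _ _ _ _ _ _ _ (is_derive_expR _)) mulrN mulNr.
Qed.

End RealDerivatives.

Section Positions.
Variables (R : realType) (d : nat) (J : 'rV[R]_d -> 'rV[R]_d -> R).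

Lemma Upos_rowsE n (y : 'M[R]_(n, d)) zs : size zs = n ->
  (forall i : 'I_n, row i y = nth 0 zs i) -> Upos J y = U J zs.
Proof.
move=> size_zs; subst n => yzs; rewrite /Upos /U /detJ /Jmx.
by congr (- ln (\det _)); apply/matrixP => i k; rewrite !mxE !yzs.
Qed.

Lemma differentiable_Upos_rows n (y : 'M[R]_(n, d)) zs : size zs = n ->
  (forall i : 'I_n, row i y = nth 0 zs i) ->
  differentiable (Upos (n := size zs) J) (posmx zs) ->
  differentiable (Upos (n := n) J) y.
Proof.
move=> size_zs; subst n => yzs; suff -> : y = posmx zs by [].
by apply/matrixP => i j; rewrite mxE -yzs mxE.
Qed.

End Positions.

Section Flow.
Variables (R : realType) (d : nat) (E : set 'rV[R]_d).
Variables (v : 'rV[R]_d -> 'rV[R]_d) (phi : R -> 'rV[R]_d -> 'rV[R]_d).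
Variable J : 'rV[R]_d -> 'rV[R]_d -> R.
Hypothesis flow_phi : is_flow E v phi.
Hypothesis detJ_regular : forall zs, config E zs ->
  0 < detJ J zs /\ differentiable (Upos (n := size zs) J) (posmx zs).

Lemma flow_inj t : injective (phi t).
Proof.
case: flow_phi => phi0 _ phiD _ x y /(congr1 (phi (- t))).
by rewrite -!phiD addNr !phi0.
Qed.

Lemma config_flow_cfg xi t : config E xi -> config E (flow_cfg phi t xi).
Proof.
case: flow_phi => _ _ _ phiE [xi_uniq xiE]; split.
  by rewrite map_inj_uniq //; apply: flow_inj.
by move=> _ /mapP[x xi_x ->]; apply/phiE/xiE.
Qed.

Lemma flow_cfgD s t xi :
  flow_cfg phi s (flow_cfg phi t xi) = flow_cfg phi (s + t) xi.
Proof.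
case: flow_phi => _ _ phiD _; rewrite /flow_cfg -map_comp.
by apply: eq_map => x /=; rewrite phiD.
Qed.

Variable xi : seq 'rV[R]_d.

Definition flow_posmx (t : R) : 'M[R]_(size xi, d) :=
  \matrix_(i < size xi, j < d) phi t (nth 0 xi i) 0 j.

Lemma row_flow_posmx t (i : 'I_(size xi)) :
  row i (flow_posmx t) = nth 0 (flow_cfg phi t xi) i.
Proof. by apply/rowP => j; rewrite !mxE /flow_cfg (nth_map 0). Qed.

Lemma size_flow_cfg t : size (flow_cfg phi t xi) = size xi.
Proof. exact: size_map. Qed.

Lemma differentiable_flow_posmx t : differentiable flow_posmx t.
Proof.
apply/derivable1_diffP/derivable_mxP => i j.
case: flow_phi => _ dphi _ _.
have [/derivable_mxP dphi_ij _] := dphi t (nth 0 xi i).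
have -> : (fun s => flow_posmx s i j) = (fun s => phi s (nth 0 xi i) 0 j).
  by apply/funext => s; rewrite mxE.
exact: dphi_ij.
Qed.

Hypothesis xi_config : config E xi.

Lemma U_flow_cfgE :
  (fun t => U J (flow_cfg phi t xi)) = Upos (n := size xi) J \o flow_posmx.
Proof.
apply/funext => t /=.
by rewrite (Upos_rowsE J (size_flow_cfg t) (row_flow_posmx t)).
Qed.

Lemma derivable_U_flow_cfg t :
  derivable (fun s => U J (flow_cfg phi s xi)) t 1.
Proof.
apply/derivable1_diffP; rewrite U_flow_cfgE.
apply: differentiable_comp; first exact: differentiable_flow_posmx.
have [_ dU] := detJ_regular (config_flow_cfg t xi_config).
exact: differentiable_Upos_rows (size_flow_cfg t) (row_flow_posmx t) dU.
Qed.

Lemma derive1_U_flow_cfg t :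
  derive1 (fun s => U J (flow_cfg phi s xi)) t = gradU J phi (flow_cfg phi t xi).
Proof.
rewrite /gradU.
have -> : (fun s => U J (flow_cfg phi s (flow_cfg phi t xi))) =
          (fun s => U J (flow_cfg phi (s + t) xi)).
  by apply/funext => s; rewrite flow_cfgD.
by rewrite (derive1_shift (@derivable_U_flow_cfg t)).
Qed.

Lemma detJ_flow_cfgE :
  (fun t => detJ J (flow_cfg phi t xi)) =
  (fun t => expR (- U J (flow_cfg phi t xi))).
Proof.
apply/funext => t; have [gt0 _] := detJ_regular (config_flow_cfg t xi_config).
by rewrite /U opprK lnK // posrE.
Qed.

Lemma derivable_detJ_flow_cfg t :
  derivable (fun s => detJ J (flow_cfg phi s xi)) t 1.
Proof.
rewrite detJ_flow_cfgE; apply/derivable1_diffP.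
apply: (@differentiable_comp _ _ _ _ (fun s => - U J (flow_cfg phi s xi)) expR).
  by apply/derivable1_diffP/derivableN; apply: derivable_U_flow_cfg.
exact/derivable1_diffP/derivable_expR.
Qed.

Lemma derive1_detJ_flow_cfg t :
  derive1 (fun s => detJ J (flow_cfg phi s xi)) t =
  - detJ J (flow_cfg phi t xi) * gradU J phi (flow_cfg phi t xi).
Proof.
rewrite detJ_flow_cfgE derive1_expRN; last by apply: derivable_U_flow_cfg.
by rewrite derive1_U_flow_cfg (congr1 (fun f => f t) detJ_flow_cfgE).
Qed.

Lemma norm_derive1_detJ_flow_cfg_le c t : H3_bound E J phi c ->
  `|derive1 (fun s => detJ J (flow_cfg phi s xi)) t| <= useq c (size xi).
Proof.
move=> H3c; have cfg_t := config_flow_cfg t xi_config.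
have [gt0 _] := detJ_regular cfg_t.
have := H3c _ cfg_t; rewrite size_flow_cfg => grad_le.
rewrite derive1_detJ_flow_cfg normrM normrN (gtr0_norm gt0).
by rewrite -ler_pdivlMl // mulrC.
Qed.

End Flow.

Theorem mainTheorem9 (R : realType) (d : nat) (E : set 'rV[R]_d)
  (J : 'rV[R]_d -> 'rV[R]_d -> R) :
  open E -> connected E ->
  H3 E J ->
  forall (v : 'rV[R]_d -> 'rV[R]_d) (phi : R -> 'rV[R]_d -> 'rV[R]_d),
    V0 E v -> is_flow E v phi ->
    forall c : R, 0 < c -> H3_bound E J phi c ->
    forall xi : seq 'rV[R]_d, config E xi ->
      (forall t : R, derivable (Ht J phi xi) t 1) /\
      (forall T : R, 0 < T ->
        forall t : R, `|t| <= T ->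
          `|derive1 (Ht J phi xi) t| <= useq c (size xi) / detJ J xi).
Proof.
move=> _ _ [detJ_regular _] v phi _ flow_phi c _ H3c xi xi_config.
have [detJ_xi_gt0 _] := detJ_regular xi xi_config.
have dg t : derivable (fun s => detJ J (flow_cfg phi s xi)) t 1.
  exact: (derivable_detJ_flow_cfg flow_phi detJ_regular xi_config (t := t)).
have -> : Ht J phi xi = fun t => detJ J (flow_cfg phi t xi) * (detJ J xi)^-1
  by [].
split=> [t | T _ t _]; first exact: derivableM (dg t) (derivable_cst _ _ _).
rewrite derive1Mr // normrM normfV (gtr0_norm detJ_xi_gt0).
apply: ler_wpM2r; first by rewrite invr_ge0 (ltW detJ_xi_gt0).
exact (norm_derive1_detJ_flow_cfg_le flow_phi detJ_regular xi_config t H3c).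
Qed.
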